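(* For all computation predicates $b,c\subseteq\Sigma^+$ and every state predicate $o\subseteq\Sigma$: $(b*c)\cap\mathrm{past}(o)=(b\cap\mathrm{past}(o))*c$.
   Context: $(\Sigma,*,\mathsf{emp})$ is a separation algebra (partial commutative monoid with a set of units such that each state has a unit with $s*1=s$ and distinct units do not compose). Computations $\Sigma^+$ (nonempty finite sequences of states) form a separation algebra with $\sigma.s*\tau.t$ defined iff $\sigma=\tau$ and $s*t$ is defined, equal to $\sigma.(s*t)$. For sets of computations, $b*c=\{x*y\mid x\in b,y\in c,x*y\text{ defined}\}$. For a state predicate $o$, $\mathrm{past}(o)=\Sigma^*.o.\Sigma^+$, the computations containing a state in $o$ strictly before their last state. *)

From Stdlib Require Import List.
Import ListNotations.
Set Implicit Arguments.

Record sep_alg (S : Type) := SepAlg {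
  sa_op : S -> S -> option S;
  sa_emp : S -> Prop;
  sa_comm : forall x y, sa_op x y = sa_op y x;
  sa_assoc : forall x y z,
    match sa_op x y with Some xy => sa_op xy z | None => None end =
    match sa_op y z with Some yz => sa_op x yz | None => None end;
  sa_unit : forall s, exists u, sa_emp u /\ sa_op s u = Some s;
  sa_units_disjoint : forall u v, sa_emp u -> sa_emp v -> u <> v -> sa_op u v = None
}.

(* A computation sigma.s in Sigma^+ : a (possibly empty) history sigma in
   Sigma^* followed by a last state s. *)
Record comp (S : Type) := Comp { hist : list S; lst : S }.

(* x * y is defined and equals z, in the separation algebra of computations:
   sigma.s * tau.t defined iff sigma = tau and s*t defined, = sigma.(s*t). *)
Definition comp_join (S : Type) (A : sep_alg S) (x y z : comp S) : Prop :=
  hist x = hist y /\ hist z = hist x /\ sa_op A (lst x) (lst y) = Some (lst z).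

Definition comp_star (S : Type) (A : sep_alg S) (b c : comp S -> Prop) : comp S -> Prop :=
  fun z => exists x y, b x /\ c y /\ comp_join A x y z.

Definition setI (T : Type) (b c : T -> Prop) : T -> Prop := fun x => b x /\ c x.

(* past(o) = Sigma^*. o . Sigma^+ : some state in o occurs strictly before the
   last state, i.e. in the history. *)
Definition past (S : Type) (o : S -> Prop) : comp S -> Prop :=
  fun x => exists s, In s (hist x) /\ o s.

Definition set_eq (T : Type) (b c : T -> Prop) : Prop := forall x, b x <-> c x.

From Stdlib Require Import List.

(* A join of computations keeps the history of its left operand, and membership
   in past(o) is decided by the history alone; hence intersecting with past(o)
   commutes with framing on the right. *)

Section HistoryInvariant.

Variable S : Type.

Definition hist_invariant (p : comp S -> Prop) : Prop :=
  forall x y, hist x = hist y -> p x -> p y.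

Lemma past_hist_invariant (o : S -> Prop) : hist_invariant (past o).
Proof.
  intros x y Hxy [s [Hs Ho]].
  exists s; split; [rewrite <- Hxy; exact Hs | exact Ho].
Qed.

Lemma comp_join_hist {A : sep_alg S} {x y z : comp S} :
  comp_join A x y z -> hist z = hist x.
Proof. intros [_ [Hzx _]]; exact Hzx. Qed.

Lemma comp_star_setIl (A : sep_alg S) (b c p : comp S -> Prop) :
  hist_invariant p -> set_eq (setI (comp_star A b c) p) (comp_star A (setI b p) c).
Proof.
  intros Hp z; split.
  - intros [[x [y [Hb [Hc Hjoin]]]] Hz].
    exists x, y; split; [split | split]; auto.
    exact (Hp z x (comp_join_hist Hjoin) Hz).
  - intros [x [y [[Hb Hx] [Hc Hjoin]]]].
    split.
    + exists x, y; auto.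
    + exact (Hp x z (eq_sym (comp_join_hist Hjoin)) Hx).
Qed.

End HistoryInvariant.

Theorem lemma4p5 (S : Type) (A : sep_alg S) (b c : comp S -> Prop) (o : S -> Prop) :
  set_eq (setI (comp_star A b c) (past o)) (comp_star A (setI b (past o)) c).
Proof.
  apply comp_star_setIl, past_hist_invariant.
Qed.
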